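(* For $\mathbf{R}=(\mathbf{R}_t)_{t=1}^T\in\mathrm{SO}(3)^T$ and $\mathbf{s}=(\mathbf{s}_t)_{t=1}^T\in(\mathbb{R}^3)^T$ define $$\mathbf{c}^\star(\mathbf{R},\mathbf{s}) \triangleq 2\mathbf{G}\Big(\mathbf{B}^\mathsf{T}\sum_{t=1}^T \mathbf{W}_t \begin{bmatrix}\mathbf{R}_t^\mathsf{T}\mathbf{y}_t^1-\mathbf{s}_t\\ \vdots\\ \mathbf{R}_t^\mathsf{T}\mathbf{y}_t^N-\mathbf{s}_t\end{bmatrix} + \lambda\bar{\mathbf{c}}\Big)+\mathbf{g},$$ which is affine in the entries of $(\mathbf{R},\mathbf{s})$. Let (Q) be the problem: minimize over $\mathbf{R}_t\in\mathrm{SO}(3)$, $\mathbf{s}_t\in\mathbb{R}^3$ ($t=1,\dots,T$), $\boldsymbol{\Omega}_t\in\mathrm{SO}(3)$, $\mathbf{v}_t\in\mathbb{R}^3$ ($t=1,\dots,T-1$) the objective $$\sum_{t=1}^T\sum_{i=1}^N w_t^i\|\mathbf{R}_t^\mathsf{T}\mathbf{y}_t^i-\mathbf{B}_i\mathbf{c}^\star-\mathbf{s}_t\|^2+\lambda\|\mathbf{c}^\star-\bar{\mathbf{c}}\|^2+\sum_{t=1}^{T-2}\big(\omega_t\|\mathbf{v}_{t+1}-\mathbf{v}_t\|^2+\kappa_t\|\boldsymbol{\Omega}_{t+1}-\boldsymbol{\Omega}_t\|_F^2\big),$$ with $\mathbf{c}^\star=\mathbf{c}^\star(\mathbf{R},\mathbf{s})$,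 subject to $\boldsymbol{\Omega}_t\mathbf{s}_{t+1}=\mathbf{s}_t+\mathbf{v}_t$ and $\mathbf{R}_{t+1}=\mathbf{R}_t\boldsymbol{\Omega}_t$ for $t=1,\dots,T-1$. Then: (i) (P) and (Q) have the same optimal value, and $(\mathbf{R}_t,\mathbf{p}_t,\mathbf{v}_t,\boldsymbol{\Omega}_t,\mathbf{c})$ is optimal for (P) if and only if $(\mathbf{R}_t,\mathbf{s}_t,\mathbf{v}_t,\boldsymbol{\Omega}_t)$ with $\mathbf{s}_t=\mathbf{R}_t^\mathsf{T}\mathbf{p}_t$ is optimal for (Q) and $\mathbf{c}=\mathbf{c}^\star(\mathbf{R},\mathbf{s})$; (ii) (Q) is a quadratically constrained quadratic program: its objective is a polynomial of degree at most $2$ in the entries of $(\mathbf{R}_t,\mathbf{s}_t,\mathbf{v}_t,\boldsymbol{\Omega}_t)$, and all its constraints (including membership in $\mathrm{SO}(3)$) can be written as polynomial equations of degree at most $2$ in these entries.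
   Context: Data: integers $T\ge 2$, $N\ge1$, $K\ge1$; matrices $\mathbf{B}_i\in\mathbb{R}^{3\times K}$ ($i=1,\dots,N$); measurements $\mathbf{y}_t^i\in\mathbb{R}^3$; weights $w_t^i>0$, $\omega_t\ge0$, $\kappa_t\ge0$, $\lambda>0$; $\bar{\mathbf{c}}\triangleq\frac1K\mathbf{1}_K$. Notation: $\mathbf{W}_t \triangleq \mathrm{blkdiag}(w_t^1\mathbf{I}_3,\dots,w_t^N\mathbf{I}_3)$, $\mathbf{B}\triangleq[\mathbf{B}_1^\mathsf{T},\dots,\mathbf{B}_N^\mathsf{T}]^\mathsf{T}\in\mathbb{R}^{3N\times K}$, $\mathbf{H}\triangleq \tfrac12(\mathbf{B}^\mathsf{T}(\sum_t\mathbf{W}_t)\mathbf{B}+\lambda\mathbf{I}_K)^{-1}$, $\mathbf{G}\triangleq \mathbf{H}-\frac{\mathbf{H}\mathbf{1}_K\mathbf{1}_K^\mathsf{T}\mathbf{H}}{\mathbf{1}_K^\mathsf{T}\mathbf{H}\mathbf{1}_K}$, $\mathbf{g}\triangleq\frac{\mathbf{H}\mathbf{1}_K}{\mathbf{1}_K^\mathsf{T}\mathbf{H}\mathbf{1}_K}$. Problem (P): minimize over $\mathbf{R}_t\in\mathrm{SO}(3)$, $\mathbf{p}_t\in\mathbb{R}^3$ ($t=1,\dots,T$), $\boldsymbol{\Omega}_t\in\mathrm{SO}(3)$, $\mathbf{v}_t\in\mathbb{R}^3$ ($t=1,\dots,T-1$), $\mathbf{c}\in\mathbb{R}^K$ with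 $\mathbf{1}_K^\mathsf{T}\mathbf{c}=1$ the objective $$\sum_{t=1}^T\sum_{i=1}^N w_t^i\|\mathbf{y}_t^i-\mathbf{R}_t\mathbf{B}_i\mathbf{c}-\mathbf{p}_t\|^2+\lambda\|\mathbf{c}-\bar{\mathbf{c}}\|^2+\sum_{t=1}^{T-2}\big(\omega_t\|\mathbf{v}_{t+1}-\mathbf{v}_t\|^2+\kappa_t\|\boldsymbol{\Omega}_{t+1}-\boldsymbol{\Omega}_t\|_F^2\big)$$ subject to $\mathbf{p}_{t+1}=\mathbf{p}_t+\mathbf{R}_t\mathbf{v}_t$, $\mathbf{R}_{t+1}=\mathbf{R}_t\boldsymbol{\Omega}_t$ for $t=1,\dots,T-1$. *)

From mathcomp Require Import all_boot all_order all_algebra.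
From mathcomp Require Import mpoly.
From mathcomp Require Import boolp classical_sets reals.

Set Implicit Arguments.
Unset Strict Implicit.
Unset Printing Implicit Defensive.

Import Order.TTheory GRing.Theory Num.Theory.
Local Open Scope ring_scope.

(* Conventions: time indices are 0-based, t = 0..T-1 (paper: 1..T);
   Omega_t, v_t for t = 0..T-2; smoothing terms for t = 0..T-3.
   Sequences indexed by time are functions nat -> ..., only the indices in
   range matter. *)

Section Prop2.
Context {F : realType} (T N K : nat).
Context (Bm : 'I_N -> 'M[F]_(3, K)) (y : nat -> 'I_N -> 'cV[F]_3)
        (w : nat -> 'I_N -> F) (om ka : nat -> F) (lam : F).

Definition sqn {m n : nat} (A : 'M[F]_(m, n)) : F := \sum_i \sum_j A i j ^+ 2.

Definition is_SO3 (M : 'M[F]_3) : Prop := M^T *m M = 1%:M /\ \det M = 1.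

Definition onesK : 'cV[F]_K := const_mx 1.
Definition cbar : 'cV[F]_K := (K%:R)^-1 *: onesK.

(* B^T (sum_t W_t) B, written blockwise: sum_t sum_i w_t^i B_i^T B_i *)
Definition BtWB : 'M[F]_K := \sum_(t < T) \sum_(i < N) w t i *: ((Bm i)^T *m Bm i).
Definition Hmat : 'M[F]_K := 2^-1 *: invmx (BtWB + lam *: 1%:M).
Definition den1H1 : F := ((onesK^T *m Hmat *m onesK) ord0 ord0).
Definition Gmat : 'M[F]_K :=
  Hmat - den1H1^-1 *: (Hmat *m onesK *m onesK^T *m Hmat).
Definition gvec : 'cV[F]_K := den1H1^-1 *: (Hmat *m onesK).

(* c*(R,s); the product B^T W_t [R_t^T y_t^i - s_t]_i written blockwise *)
Definition cstar (Rot : nat -> 'M[F]_3) (s : nat -> 'cV[F]_3) : 'cV[F]_K :=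
  2%:R *: (Gmat *m (\sum_(t < T) \sum_(i < N)
              w t i *: ((Bm i)^T *m ((Rot t)^T *m y t i - s t))
            + lam *: cbar)) + gvec.

Definition smooth (Om : nat -> 'M[F]_3) (v : nat -> 'cV[F]_3) : F :=
  \sum_(t < T - 2) (om t * sqn (v t.+1 - v t) + ka t * sqn (Om t.+1 - Om t)).

Definition Pobj (Rot : nat -> 'M[F]_3) (p : nat -> 'cV[F]_3)
    (Om : nat -> 'M[F]_3) (v : nat -> 'cV[F]_3) (c : 'cV[F]_K) : F :=
  \sum_(t < T) \sum_(i < N) w t i * sqn (y t i - Rot t *m (Bm i *m c) - p t)
  + lam * sqn (c - cbar) + smooth Om v.

Definition Pfeas (Rot : nat -> 'M[F]_3) (p : nat -> 'cV[F]_3)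
    (Om : nat -> 'M[F]_3) (v : nat -> 'cV[F]_3) (c : 'cV[F]_K) : Prop :=
  [/\ forall t, (t < T)%N -> is_SO3 (Rot t),
      forall t, (t < T - 1)%N -> is_SO3 (Om t),
      \sum_(k < K) c k ord0 = 1 &
      forall t, (t < T - 1)%N -> p t.+1 = p t + Rot t *m v t /\ Rot t.+1 = Rot t *m Om t].

Definition Popt Rot p Om v c : Prop :=
  Pfeas Rot p Om v c /\
  forall Rot' p' Om' v' c', Pfeas Rot' p' Om' v' c' ->
    Pobj Rot p Om v c <= Pobj Rot' p' Om' v' c'.

Definition Pval : F :=
  inf [set x : F | exists Rot p Om v c, Pfeas Rot p Om v c /\ x = Pobj Rot p Om v c].

Definition Qobj (Rot : nat -> 'M[F]_3) (s : nat -> 'cV[F]_3)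
    (Om : nat -> 'M[F]_3) (v : nat -> 'cV[F]_3) : F :=
  let c := cstar Rot s in
  \sum_(t < T) \sum_(i < N) w t i * sqn ((Rot t)^T *m y t i - Bm i *m c - s t)
  + lam * sqn (c - cbar) + smooth Om v.

Definition Qfeas (Rot : nat -> 'M[F]_3) (s : nat -> 'cV[F]_3)
    (Om : nat -> 'M[F]_3) (v : nat -> 'cV[F]_3) : Prop :=
  [/\ forall t, (t < T)%N -> is_SO3 (Rot t),
      forall t, (t < T - 1)%N -> is_SO3 (Om t) &
      forall t, (t < T - 1)%N -> Om t *m s t.+1 = s t + v t /\ Rot t.+1 = Rot t *m Om t].

Definition Qopt Rot s Om v : Prop :=
  Qfeas Rot s Om v /\
  forall Rot' s' Om' v', Qfeas Rot' s' Om' v' -> Qobj Rot s Om v <= Qobj Rot' s' Om' v'.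

Definition Qval : F :=
  inf [set x : F | exists Rot s Om v, Qfeas Rot s Om v /\ x = Qobj Rot s Om v].

(* ---------- Coordinates of (R_t, s_t, Omega_t, v_t) as a vector of
   nvar = 9T + 3T + 9(T-1) + 3(T-1) real variables ---------- *)
Definition nvar : nat := (12 * T + 12 * (T - 1))%N.

Definition getx (x : 'I_nvar -> F) (k : nat) : F := oapp x 0 (insub k).

Definition dec_Rot (x : 'I_nvar -> F) (t : nat) : 'M[F]_3 :=
  \matrix_(a < 3, b < 3) getx x (9 * t + 3 * a + b).
Definition dec_s (x : 'I_nvar -> F) (t : nat) : 'cV[F]_3 :=
  \col_(a < 3) getx x (9 * T + 3 * t + a).
Definition dec_Om (x : 'I_nvar -> F) (t : nat) : 'M[F]_3 :=
  \matrix_(a < 3, b < 3) getx x (12 * T + 9 * t + 3 * a + b).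
Definition dec_v (x : 'I_nvar -> F) (t : nat) : 'cV[F]_3 :=
  \col_(a < 3) getx x (12 * T + 9 * (T - 1) + 3 * t + a).

End Prop2.

From mathcomp Require Import all_boot all_order all_algebra.
From mathcomp Require Import mpoly.
From mathcomp Require Import boolp classical_sets reals.
From mathcomp Require Import ring zify.

(* Fix the rotations and put s_t = R_t^T p_t.  Rotating every residual by
   R_t^T does not change its norm, and turns the cost of (P) into a quadratic
   function of c with Hessian A = B^T (sum_t W_t) B + lambda I, which is
   positive definite.  On the hyperplane 1^T c = 1 this quadratic is
   minimized at c* = 2 G z + g (Lagrange: A c* - z is a multiple of 1 and
   1^T c* = 1), and the cost of (P) at c equals the cost of (Q) plus
   d^T A d with d = c - c*.  The constraints of (P) and (Q) correspond under
   p_t = R_t s_t, so (P) reduces to (Q) with c = c*.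
   For (ii), c* is affine in the variables, hence the objective of (Q) has
   degree 2, and SO(3) is cut out by R^T R = I together with adj R = R^T,
   whose right-hand entries are 2 x 2 minors. *)

Set Implicit Arguments.
Unset Strict Implicit.
Unset Printing Implicit Defensive.
Import Order.TTheory GRing.Theory Num.Theory.
Local Open Scope ring_scope.

Section PolynomialFunctions.
Context {R : idomainType} {n : nat}.
Implicit Types (f g : ('I_n -> R) -> R).

(* [msize P] is the total degree of [P] plus one. *)
Definition polyfun (d : nat) f :=
  exists P : {mpoly R[n]}, (msize P <= d.+1)%N /\ forall x, f x = P.@[x].

Lemma polyfun_le d e f : (d <= e)%N -> polyfun d f -> polyfun e f.
Proof. by move=> le_de [P [szP fP]]; exists P; split=> //; apply: leq_trans szP _. Qed.

Lemma polyfun_cst d c : polyfun d (fun _ => c).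
Proof.
exists c%:MP; split=> [|x]; last by rewrite mevalC.
by rewrite msizeC; case: (c != 0).
Qed.

Lemma polyfun_var (i : 'I_n) : polyfun 1 (fun x => x i).
Proof. by exists 'X_i; split=> [|x]; rewrite ?msizeX ?mdeg1 ?mevalXU. Qed.

Lemma polyfunD d f g : polyfun d f -> polyfun d g -> polyfun d (fun x => f x + g x).
Proof.
move=> [P [szP fP]] [Q [szQ gQ]]; exists (P + Q); split=> [|x].
  by apply: leq_trans (msizeD_le _ _) _; rewrite geq_max szP szQ.
by rewrite mevalD fP gQ.
Qed.

Lemma polyfunN d f : polyfun d f -> polyfun d (fun x => - f x).
Proof.
by move=> [P [szP fP]]; exists (- P); rewrite msizeN; split=> // x; rewrite mevalN fP.
Qed.

Lemma polyfunB d f g : polyfun d f -> polyfun d g -> polyfun d (fun x => f x - g x).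
Proof. by move=> pf pg; apply: polyfunD pf (polyfunN pg). Qed.

Lemma polyfunM d e f g :
  polyfun d f -> polyfun e g -> polyfun (d + e) (fun x => f x * g x).
Proof.
move=> [P [szP fP]] [Q [szQ gQ]]; exists (P * Q); split=> [|x]; last first.
  by rewrite mevalM fP gQ.
have [->|nzP] := eqVneq P 0; first by rewrite mul0r msize0.
have [->|nzQ] := eqVneq Q 0; first by rewrite mulr0 msize0.
have : (0 < msize P)%N by rewrite lt0n msize_poly_eq0.
have : (0 < msize Q)%N by rewrite lt0n msize_poly_eq0.
rewrite msizeM //; lia.
Qed.

Lemma polyfunZ d c f : polyfun d f -> polyfun d (fun x => c * f x).
Proof. exact: polyfunM (polyfun_cst 0 c). Qed.

Lemma polyfun_sum d (I : Type) (r : seq I) (P : pred I) (h : I -> ('I_n -> R) -> R) :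
  (forall i, P i -> polyfun d (h i)) ->
  polyfun d (fun x => \sum_(i <- r | P i) h i x).
Proof.
move=> ph; elim: r => [|a r IHr].
  by under eq_fun => x do rewrite big_nil; apply: polyfun_cst.
under eq_fun => x do rewrite big_cons.
by case: (boolP (P a)) => Pa; [apply: polyfunD (ph a Pa) IHr | exact: IHr].
Qed.

Lemma polyfun_prod d m (h : 'I_m -> ('I_n -> R) -> R) :
  (forall i, polyfun d (h i)) -> polyfun (d * m) (fun x => \prod_(i < m) h i x).
Proof.
elim: m h => [|m IHm] h ph.
  by under eq_fun => x do rewrite big_ord0; apply: polyfun_cst.
under eq_fun => x do rewrite big_ord_recr.
by rewrite mulnS addnC; apply: polyfunM; [apply: IHm | apply: ph].
Qed.

Definition polymx d a b (M : ('I_n -> R) -> 'M[R]_(a, b)) :=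
  forall i j, polyfun d (fun x => M x i j).

Lemma polymx_le d e a b (M : ('I_n -> R) -> 'M[R]_(a, b)) :
  (d <= e)%N -> polymx d M -> polymx e M.
Proof. by move=> le_de pM i j; apply: polyfun_le (pM i j). Qed.

Lemma polymx_cst d a b (C : 'M[R]_(a, b)) : polymx d (fun _ => C).
Proof. by move=> i j; apply: polyfun_cst. Qed.

Lemma polymxD d a b (M1 M2 : ('I_n -> R) -> 'M[R]_(a, b)) :
  polymx d M1 -> polymx d M2 -> polymx d (fun x => M1 x + M2 x).
Proof.
by move=> p1 p2 i j; under eq_fun => x do rewrite mxE; apply: polyfunD.
Qed.

Lemma polymxN d a b (M : ('I_n -> R) -> 'M[R]_(a, b)) :
  polymx d M -> polymx d (fun x => - M x).
Proof. by move=> pM i j; under eq_fun => x do rewrite mxE; apply: polyfunN. Qed.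

Lemma polymxB d a b (M1 M2 : ('I_n -> R) -> 'M[R]_(a, b)) :
  polymx d M1 -> polymx d M2 -> polymx d (fun x => M1 x - M2 x).
Proof. by move=> p1 p2; apply: polymxD p1 (polymxN p2). Qed.

Lemma polymxZ d a b c (M : ('I_n -> R) -> 'M[R]_(a, b)) :
  polymx d M -> polymx d (fun x => c *: M x).
Proof. by move=> pM i j; under eq_fun => x do rewrite mxE; apply: polyfunZ. Qed.

Lemma polymx_tr d a b (M : ('I_n -> R) -> 'M[R]_(a, b)) :
  polymx d M -> polymx d (fun x => (M x)^T).
Proof. by move=> pM i j; under eq_fun => x do rewrite mxE; apply: pM. Qed.

Lemma polymx_sum d a b (I : Type) (r : seq I) (P : pred I)
    (h : I -> ('I_n -> R) -> 'M[R]_(a, b)) :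
  (forall i, P i -> polymx d (h i)) ->
  polymx d (fun x => \sum_(i <- r | P i) h i x).
Proof.
move=> ph i j; under eq_fun => x do rewrite summxE.
by apply: polyfun_sum => k Pk; apply: ph.
Qed.

Lemma polymxM d e a b c (M1 : ('I_n -> R) -> 'M[R]_(a, b))
    (M2 : ('I_n -> R) -> 'M[R]_(b, c)) :
  polymx d M1 -> polymx e M2 -> polymx (d + e) (fun x => M1 x *m M2 x).
Proof.
move=> p1 p2 i j; under eq_fun => x do rewrite mxE.
by apply: polyfun_sum => k _; apply: polyfunM.
Qed.

Lemma polymx_mull d a b c (C : 'M[R]_(a, b)) (M : ('I_n -> R) -> 'M[R]_(b, c)) :
  polymx d M -> polymx d (fun x => C *m M x).
Proof. exact: polymxM (polymx_cst 0 C). Qed.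

Lemma polyfun_det d m (M : ('I_n -> R) -> 'M[R]_m) :
  polymx d M -> polyfun (d * m) (fun x => \det (M x)).
Proof.
by move=> pM; apply: polyfun_sum => s _; apply: polyfunZ; apply: polyfun_prod.
Qed.

Lemma polymx_adj m (M : ('I_n -> R) -> 'M[R]_m.+1) :
  polymx 1 M -> polymx m (fun x => \adj (M x)).
Proof.
move=> pM i j; under eq_fun => x do rewrite mxE.
apply/polyfunZ/(@polyfun_le (1 * m)); first by rewrite mul1n.
apply: polyfun_det => k l.
by under eq_fun => x do rewrite !mxE; apply: pM.
Qed.

End PolynomialFunctions.

Lemma polyfun_sqn (F : realType) n d a b (M : ('I_n -> F) -> 'M[F]_(a, b)) :
  polymx d M -> polyfun (d + d) (fun x => sqn (M x)).
Proof.
move=> pM; apply: polyfun_sum => i _; apply: polyfun_sum => j _.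
by under eq_fun => x do rewrite expr2; apply: polyfunM.
Qed.

Section QuadraticLoci.
Context {R : idomainType} {n : nat}.
Implicit Types (Phi Psi : ('I_n -> R) -> Prop).

Definition quadratic_locus Phi := exists cs : seq {mpoly R[n]},
  all (fun q => msize q <= 3)%N cs /\ forall x, Phi x <-> all (fun q => q.@[x] == 0) cs.

Lemma quadratic_locus_ext Phi Psi :
  (forall x, Phi x <-> Psi x) -> quadratic_locus Phi -> quadratic_locus Psi.
Proof. by move=> ePhi [cs [szcs Phics]]; exists cs; split=> // x; rewrite -ePhi. Qed.

Lemma quadratic_locus_eq0 (f : ('I_n -> R) -> R) :
  polyfun 2 f -> quadratic_locus (fun x => f x = 0).
Proof.
move=> [P [szP fP]]; exists [:: P]; rewrite /= szP; split=> // x.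
by rewrite andbT fP; split=> [->|/eqP].
Qed.

Lemma quadratic_locusI Phi Psi :
  quadratic_locus Phi -> quadratic_locus Psi -> quadratic_locus (fun x => Phi x /\ Psi x).
Proof.
move=> [cs [szcs Phics]] [ds [szds Psids]]; exists (cs ++ ds).
rewrite all_cat szcs szds; split=> // x.
by rewrite all_cat Phics Psids; split=> [[-> ->] | /andP].
Qed.

Lemma quadratic_locus_all (I : eqType) (s : seq I) (Phi : I -> ('I_n -> R) -> Prop) :
  (forall i, quadratic_locus (Phi i)) ->
  quadratic_locus (fun x => forall i, i \in s -> Phi i x).
Proof.
move=> qPhi; elim: s => [|a s IHs].
  by exists [::]; split=> // x; split=> // _ i; rewrite in_nil.
apply: quadratic_locus_ext (quadratic_locusI (qPhi a) IHs) => x.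
split=> [[Pa Ps] i | Pas]; first by rewrite in_cons => /predU1P[-> | /Ps].
by split=> [|i si]; apply: Pas; rewrite in_cons ?eqxx ?si ?orbT.
Qed.

Lemma quadratic_locus_forall (I : finType) (Phi : I -> ('I_n -> R) -> Prop) :
  (forall i, quadratic_locus (Phi i)) -> quadratic_locus (fun x => forall i, Phi i x).
Proof.
move=> /(quadratic_locus_all (enum I)); apply: quadratic_locus_ext => x.
by split=> Px i => [|_]; apply: Px; rewrite ?mem_enum.
Qed.

Lemma quadratic_locus_forall_ltn m (Phi : nat -> ('I_n -> R) -> Prop) :
  (forall t, quadratic_locus (Phi t)) ->
  quadratic_locus (fun x => forall t, (t < m)%N -> Phi t x).
Proof.
move=> /(quadratic_locus_all (iota 0 m)); apply: quadratic_locus_ext => x.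
by split=> Px t t_lt; apply: Px; move: t_lt; rewrite mem_iota.
Qed.

Lemma quadratic_locus_mxeq a b (M1 M2 : ('I_n -> R) -> 'M[R]_(a, b)) :
  polymx 2 M1 -> polymx 2 M2 -> quadratic_locus (fun x => M1 x = M2 x).
Proof.
move=> p1 p2; apply: (@quadratic_locus_ext
  (fun x => forall ij : 'I_a * 'I_b, M1 x ij.1 ij.2 - M2 x ij.1 ij.2 = 0)).
  move=> x; split=> [eqM | -> [i j]]; last exact: subrr.
  by apply/matrixP => i j; apply/eqP; rewrite -subr_eq0; apply/eqP/(eqM (i, j)).
by apply: quadratic_locus_forall => -[i j]; apply/quadratic_locus_eq0/polyfunB.
Qed.

End QuadraticLoci.

Lemma SO_adjE (R : comUnitRingType) m (M : 'M[R]_m.+1) :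
  (M^T *m M = 1%:M /\ \det M = 1) <-> (M^T *m M = 1%:M /\ \adj M = M^T).
Proof.
split=> -[orthM detM]; split=> //.
  by rewrite -[LHS]mul1mx -orthM -mulmxA mul_mx_adj detM mulmx1.
have /matrixP/(_ 0 0) := mul_mx_adj M.
by rewrite detM (mulmx1C orthM) !mxE.
Qed.

Lemma quadratic_locus_SO3 (R : realType) n (M : ('I_n -> R) -> 'M[R]_3) :
  polymx 1 M -> quadratic_locus (fun x => is_SO3 (M x)).
Proof.
move=> pM; apply: quadratic_locus_ext (fun x => iff_sym (SO_adjE (M x))) _.
apply: quadratic_locusI; apply: quadratic_locus_mxeq.
- exact: (polymxM (polymx_tr pM) pM).
- exact: polymx_cst.
- exact: polymx_adj.
- exact: polymx_le (polymx_tr pM).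
Qed.

Section Dot.
Variable R : comNzRingType.

Definition dot m (u v : 'cV[R]_m) : R := (u^T *m v) 0 0.

Lemma dotE m (u v : 'cV[R]_m) : dot u v = \sum_k u k 0 * v k 0.
Proof. by rewrite /dot mxE; apply: eq_bigr => k _; rewrite mxE. Qed.

Lemma dotC m (u v : 'cV[R]_m) : dot u v = dot v u.
Proof. by rewrite !dotE; apply: eq_bigr => k _; rewrite mulrC. Qed.

Lemma dotDr m (u v1 v2 : 'cV[R]_m) : dot u (v1 + v2) = dot u v1 + dot u v2.
Proof. by rewrite /dot mulmxDr mxE. Qed.

Lemma dotBr m (u v1 v2 : 'cV[R]_m) : dot u (v1 - v2) = dot u v1 - dot u v2.
Proof. by rewrite /dot mulmxBr !mxE. Qed.

Lemma dotZr m a (u v : 'cV[R]_m) : dot u (a *: v) = a * dot u v.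
Proof. by rewrite /dot -scalemxAr mxE. Qed.

Lemma dotDl m (u1 u2 v : 'cV[R]_m) : dot (u1 + u2) v = dot u1 v + dot u2 v.
Proof. by rewrite dotC dotDr !(dotC v). Qed.

Lemma dotBl m (u1 u2 v : 'cV[R]_m) : dot (u1 - u2) v = dot u1 v - dot u2 v.
Proof. by rewrite dotC dotBr !(dotC v). Qed.

Lemma dot0r m (u : 'cV[R]_m) : dot u 0 = 0.
Proof. by rewrite /dot mulmx0 mxE. Qed.

Lemma dot0l m (u : 'cV[R]_m) : dot 0 u = 0.
Proof. by rewrite dotC dot0r. Qed.

Lemma dot_sumr m (I : Type) (r : seq I) (P : pred I) (f : I -> 'cV[R]_m) u :
  dot u (\sum_(i <- r | P i) f i) = \sum_(i <- r | P i) dot u (f i).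
Proof. by rewrite /dot mulmx_sumr summxE. Qed.

Lemma dot_mulmxl m p (M : 'M[R]_(p, m)) (u : 'cV[R]_m) v :
  dot (M *m u) v = dot u (M^T *m v).
Proof. by rewrite /dot trmx_mul mulmxA. Qed.

End Dot.

Lemma dotxx_ge0 (R : realDomainType) m (u : 'cV[R]_m) : 0 <= dot u u.
Proof. by rewrite dotE sumr_ge0 // => k _; rewrite -expr2 sqr_ge0. Qed.

Lemma dotxx_gt0 (R : realDomainType) m (u : 'cV[R]_m) : u != 0 -> 0 < dot u u.
Proof.
apply: contraNT; rewrite -leNgt => le0.
have /psumr_eq0P sq0 : \sum_k u k 0 * u k 0 = 0 by apply/le_anti; rewrite -dotE le0 dotxx_ge0.
apply/eqP/matrixP => i j; rewrite ord1 mxE; apply/eqP; rewrite -[_ == 0]orbb -mulf_eq0.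
by apply/eqP/sq0 => // k _; rewrite -expr2 sqr_ge0.
Qed.

Section ConstrainedLeastSquares.
Variables (F : realType) (K : nat) (A : 'M[F]_K).
Hypotheses (K_gt0 : (0 < K)%N) (A_sym : A^T = A)
  (A_posdef : forall d, d != 0 -> 0 < dot d (A *m d)).
Local Notation one := (onesK K : 'cV[F]_K).

(* The paper's H, G, g for an arbitrary A; at A = B^T (sum_t W_t) B + lambda I
   these are [Hmat], [Gmat], [gvec], and [cstar] is [cls_sol] by conversion. *)
Definition cls_H := 2^-1 *: invmx A.
Definition cls_gamma := (one^T *m cls_H *m one) ord0 ord0.
Definition cls_G := cls_H - cls_gamma^-1 *: (cls_H *m one *m one^T *m cls_H).
Definition cls_g := cls_gamma^-1 *: (cls_H *m one).
Definition cls_sol (z : 'cV[F]_K) := 2%:R *: (cls_G *m z) + cls_g.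

Lemma posdef_unitmx : A \in unitmx.
Proof.
rewrite unitmxE unitfE; apply/negP => /det0P[v nz_v vA].
have Av : A *m v^T = 0 by rewrite -A_sym -trmx_mul vA trmx0.
have : v^T != 0 by rewrite -trmx0 (inj_eq trmx_inj).
by move/A_posdef; rewrite Av dot0r ltxx.
Qed.

Lemma mulmx_cls_H : A *m cls_H = 2^-1 *: 1%:M.
Proof. by rewrite -scalemxAr mulmxV // posdef_unitmx. Qed.

Lemma onesK_neq0 : one != 0.
Proof.
apply/eqP => /matrixP/(_ (Ordinal K_gt0) 0)/eqP; rewrite !mxE.
exact/negP/oner_neq0.
Qed.

Lemma dot_onesK c : dot one c = \sum_k c k ord0.
Proof. by rewrite dotE; apply: eq_bigr => k _; rewrite mxE mul1r. Qed.

Lemma cls_gamma_gt0 : 0 < cls_gamma.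
Proof.
set u := invmx A *m one.
have Au : A *m u = one by rewrite mulmxA mulmxV ?posdef_unitmx ?mul1mx.
have nz_u : u != 0 by apply: contraNneq onesK_neq0 => u0; rewrite -Au u0 mulmx0.
have -> : cls_gamma = 2^-1 * dot u (A *m u).
  rewrite /cls_gamma -scalemxAr -scalemxAl mxE -mulmxA -/(dot one u) -Au.
  by rewrite dot_mulmxl A_sym dotC.
by rewrite mulr_gt0 ?invr_gt0 ?ltr0n ?A_posdef.
Qed.

Lemma sum_cls_sol z : \sum_k cls_sol z k ord0 = 1.
Proof.
have one_H_one : one^T *m cls_H *m one = cls_gamma%:M by rewrite [LHS]mx11_scalar.
have nz_gamma : cls_gamma != 0 by rewrite gt_eqF ?cls_gamma_gt0.
have oneG : one^T *m cls_G = 0.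
  rewrite /cls_G mulmxBr -[X in _ - X]scalemxAr !mulmxA one_H_one mul_scalar_mx.
  by rewrite -scalemxAl scalerA mulVf // scale1r subrr.
rewrite -dot_onesK /dot mulmxDr -scalemxAr mulmxA oneG mul0mx scaler0 add0r.
by rewrite -scalemxAr mulmxA one_H_one scale_scalar_mx mulVf // mxE.
Qed.

Lemma cls_sol_normal z : exists a, A *m cls_sol z = z + a *: one.
Proof.
have nz_gamma : cls_gamma != 0 by rewrite gt_eqF ?cls_gamma_gt0.
set h := (one^T *m cls_H *m z) 0 0.
have AGz : A *m (cls_G *m z) = 2^-1 *: z - (cls_gamma^-1 * 2^-1 * h) *: one.
  rewrite mulmxA /cls_G mulmxBr mulmx_cls_H -scalemxAr !mulmxA mulmx_cls_H.
  rewrite mulmxBl -!scalemxAl !mul1mx -2!mulmxA.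
  by rewrite [one^T *m _ *m z]mx11_scalar mul_mx_scalar !scalerA.
have Ag : A *m cls_g = (cls_gamma^-1 * 2^-1) *: one.
  by rewrite -scalemxAr mulmxA mulmx_cls_H -scalemxAl mul1mx scalerA.
exists (cls_gamma^-1 * (2^-1 - h)).
rewrite mulmxDr -scalemxAr AGz Ag; apply/matrixP => i j; rewrite !mxE.
by field.
Qed.

Lemma cls_quad_decomp (z c : 'cV[F]_K) : \sum_k c k ord0 = 1 ->
  dot c (A *m c) - 2%:R * dot c z =
  dot (cls_sol z) (A *m cls_sol z) - 2%:R * dot (cls_sol z) z
  + dot (c - cls_sol z) (A *m (c - cls_sol z)).
Proof.
move=> sum_c; set s := cls_sol z; set d := c - s.
have -> : c = s + d by rewrite addrC subrK.
have d_one : dot d one = 0 by rewrite dotC dotBr !dot_onesK sum_c sum_cls_sol subrr.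
have [a As] := cls_sol_normal z.
have dAs : dot d (A *m s) = dot d z by rewrite As dotDr dotZr d_one mulr0 addr0.
have sAd : dot s (A *m d) = dot d (A *m s) by rewrite dotC dot_mulmxl A_sym.
by rewrite mulmxDr (dotDl s d) (dotDr s) (dotDr d) (dotDl s d z) sAd dAs; ring.
Qed.

End ConstrainedLeastSquares.

Section SquaredNorm.
Variable F : realType.

Lemma sqn_ge0 m n (M : 'M[F]_(m, n)) : 0 <= sqn M.
Proof. by rewrite sumr_ge0 // => i _; rewrite sumr_ge0 // => j _; rewrite sqr_ge0. Qed.

Lemma sqn_dot m (u : 'cV[F]_m) : sqn u = dot u u.
Proof. by rewrite /sqn dotE; apply: eq_bigr => k _; rewrite big_ord1 expr2. Qed.

Lemma sqnB m (a b : 'cV[F]_m) : sqn (a - b) = dot a a - 2%:R * dot b a + dot b b.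
Proof. by rewrite sqn_dot dotBl !dotBr (dotC a b); ring. Qed.

Lemma sqn_orthmx m (M : 'M[F]_m) (z : 'cV[F]_m) :
  M^T *m M = 1%:M -> sqn (M^T *m z) = sqn z.
Proof. by move=> orthM; rewrite !sqn_dot dot_mulmxl trmxK mulmxA (mulmx1C orthM) mul1mx. Qed.

End SquaredNorm.

Lemma inf_eq_coinitial (R : realType) (E1 E2 : set R) :
  (E1 `<=` E2)%classic -> (forall x, E2 x -> exists2 y, E1 y & y <= x) ->
  (E1 !=set0)%classic -> has_lbound E1 -> inf E1 = inf E2.
Proof.
move=> sub12 dom21 ne1 lb1.
have lb2 : has_lbound E2.
  by case: lb1 => m m_lb; exists m => x /dom21[y /m_lb le_my le_yx]; apply: le_trans le_yx.
apply/le_anti/andP; split.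
  apply: lb_le_inf => [|x /dom21[y E1y le_yx]]; first by case: ne1 => x /sub12; exists x.
  exact: le_trans (ge_inf lb1 E1y) le_yx.
by apply: lb_le_inf => // x /sub12; apply: ge_inf.
Qed.

Section Reduction.
Variables (F : realType) (T N K : nat) (Bm : 'I_N -> 'M[F]_(3, K))
  (y : nat -> 'I_N -> 'cV[F]_3) (w : nat -> 'I_N -> F) (om ka : nat -> F) (lam : F).
Hypotheses (K_gt0 : (0 < K)%N) (w_gt0 : forall t (i : 'I_N), (t < T)%N -> 0 < w t i)
  (om_ge0 : forall t, (t < T - 2)%N -> 0 <= om t)
  (ka_ge0 : forall t, (t < T - 2)%N -> 0 <= ka t) (lam_gt0 : 0 < lam).

Implicit Types (Rot Om : nat -> 'M[F]_3) (p s v : nat -> 'cV[F]_3)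
  (u : nat -> 'I_N -> 'cV[F]_3) (c d : 'cV[F]_K).

Local Notation A := (BtWB T Bm w + lam *: 1%:M).
Local Notation c_star := (cstar T Bm y w lam).
Local Notation costP := (Pobj T Bm y w om ka lam).
Local Notation costQ := (Qobj T Bm y w om ka lam).

Lemma gram_sym : A^T = A.
Proof.
rewrite linearD /= linearZ /= trmx1 linear_sum; congr (_ + _).
apply: eq_bigr => t _; rewrite linear_sum; apply: eq_bigr => i _.
by rewrite linearZ /= trmx_mul trmxK.
Qed.

Lemma gram_quadE d : dot d (A *m d) =
  \sum_(t < T) \sum_(i < N) w t i * dot (Bm i *m d) (Bm i *m d) + lam * dot d d.
Proof.
rewrite mulmxDl dotDr -scalemxAl mul1mx dotZr mulmx_suml dot_sumr; congr (_ + _).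
apply: eq_bigr => t _; rewrite mulmx_suml dot_sumr; apply: eq_bigr => i _.
by rewrite -scalemxAl dotZr -mulmxA -dot_mulmxl.
Qed.

Lemma gram_posdef d : d != 0 -> 0 < dot d (A *m d).
Proof.
move=> nz_d; rewrite gram_quadE ltr_wpDl ?mulr_gt0 ?dotxx_gt0 //.
rewrite sumr_ge0 // => t _; rewrite sumr_ge0 // => i _.
by rewrite mulr_ge0 ?dotxx_ge0 // ltW ?w_gt0.
Qed.

Lemma gram_quad_ge0 d : 0 <= dot d (A *m d).
Proof.
by have [->|/gram_posdef/ltW //] := eqVneq d 0; rewrite mulmx0 dot0r.
Qed.

Lemma gram_quad_le0 d : dot d (A *m d) <= 0 -> d = 0.
Proof. by apply: contraTeq => /gram_posdef; rewrite -ltNge. Qed.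

Definition residual (Rot : nat -> 'M[F]_3) (s : nat -> 'cV[F]_3) t i :=
  (Rot t)^T *m y t i - s t.

Definition fit_cost (u : nat -> 'I_N -> 'cV[F]_3) (c : 'cV[F]_K) :=
  \sum_(t < T) \sum_(i < N) w t i * sqn (u t i - Bm i *m c) + lam * sqn (c - cbar K).

Definition fit_moment (u : nat -> 'I_N -> 'cV[F]_3) :=
  \sum_(t < T) \sum_(i < N) w t i *: ((Bm i)^T *m u t i) + lam *: cbar K.

Lemma fit_costE u c :
  fit_cost u c = dot c (A *m c) - 2%:R * dot c (fit_moment u) + fit_cost u 0.
Proof.
set k := \sum_(t < T) \sum_(i < N) w t i * dot (u t i) (u t i) + lam * dot (cbar K) (cbar K).
suff costE c' : fit_cost u c' = dot c' (A *m c') - 2%:R * dot c' (fit_moment u) + k.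
  by rewrite !costE mulmx0 dot0r dot0l; ring.
have termE t i : w t i * sqn (u t i - Bm i *m c') = w t i * dot (Bm i *m c') (Bm i *m c')
    - 2%:R * (w t i * dot c' ((Bm i)^T *m u t i)) + w t i * dot (u t i) (u t i).
  by rewrite sqnB -dot_mulmxl; ring.
have momentE : dot c' (fit_moment u) =
    \sum_(t < T) \sum_(i < N) w t i * dot c' ((Bm i)^T *m u t i) + lam * dot c' (cbar K).
  rewrite dotDr dot_sumr dotZr; congr (_ + _); apply: eq_bigr => t _.
  by rewrite dot_sumr; apply: eq_bigr => i _; rewrite dotZr.
rewrite /fit_cost gram_quadE momentE sqnB (dotC (cbar K)).
under eq_bigr => t _ do rewrite (eq_bigr _ (fun i _ => termE t i)) big_split sumrB -mulr_sumr.
by rewrite big_split sumrB -mulr_sumr /= /k; ring.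
Qed.

Lemma fit_cost_ge0 u c : 0 <= fit_cost u c.
Proof.
apply: addr_ge0; last by rewrite mulr_ge0 ?sqn_ge0 ?ltW.
apply: sumr_ge0 => t _; apply: sumr_ge0 => i _.
by rewrite mulr_ge0 ?sqn_ge0 // ltW ?w_gt0.
Qed.

Lemma fit_cost_decomp u c : \sum_k c k ord0 = 1 ->
  let c' := cls_sol A (fit_moment u) in
  fit_cost u c = fit_cost u c' + dot (c - c') (A *m (c - c')).
Proof.
move=> sum_c c'; rewrite (fit_costE u c) (fit_costE u c').
by rewrite (cls_quad_decomp K_gt0 gram_sym gram_posdef _ sum_c); ring.
Qed.

Lemma sum_cstar Rot s : \sum_k c_star Rot s k ord0 = 1.
Proof. exact: sum_cls_sol K_gt0 gram_sym gram_posdef _. Qed.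

Lemma smooth_ge0 Om v : 0 <= smooth T om ka Om v.
Proof.
rewrite sumr_ge0 // => t _.
by rewrite addr_ge0 // mulr_ge0 ?sqn_ge0 ?om_ge0 ?ka_ge0.
Qed.

Lemma QobjE Rot s Om v :
  costQ Rot s Om v = fit_cost (residual Rot s) (c_star Rot s) + smooth T om ka Om v.
Proof.
congr (_ + _ + _); apply: eq_bigr => t _; apply: eq_bigr => i _.
by rewrite /residual addrAC.
Qed.

Lemma Qobj_ge0 Rot s Om v : 0 <= costQ Rot s Om v.
Proof. by rewrite QobjE addr_ge0 ?fit_cost_ge0 ?smooth_ge0. Qed.

Lemma Pobj_Qobj Rot p Om v c s :
  (forall t, (t < T)%N -> (Rot t)^T *m Rot t = 1%:M) ->
  (forall t, (t < T)%N -> s t = (Rot t)^T *m p t) -> \sum_k c k ord0 = 1 ->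
  costP Rot p Om v c =
  costQ Rot s Om v + dot (c - c_star Rot s) (A *m (c - c_star Rot s)).
Proof.
move=> orthR sE sum_c.
have -> : costP Rot p Om v c = fit_cost (residual Rot s) c + smooth T om ka Om v.
  congr (_ + _ + _); apply: eq_bigr => t _; apply: eq_bigr => i _; congr (_ * _).
  have orthRt := orthR t (ltn_ord t).
  rewrite -(sqn_orthmx _ orthRt) /residual sE // !mulmxBr !mulmxA orthRt mul1mx.
  by rewrite addrAC.
by rewrite QobjE (fit_cost_decomp _ sum_c) addrAC.
Qed.

Lemma Pfeas_orth Rot p Om v c : Pfeas T Rot p Om v c ->
  forall t, (t < T)%N -> (Rot t)^T *m Rot t = 1%:M.
Proof. by case=> SO_Rot _ _ _ t /SO_Rot[]. Qed.

Lemma Qfeas_orth Rot s Om v : Qfeas T Rot s Om v ->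
  forall t, (t < T)%N -> (Rot t)^T *m Rot t = 1%:M.
Proof. by case=> SO_Rot _ _ t /SO_Rot[]. Qed.

Lemma Pfeas_Qfeas Rot p Om v c :
  Pfeas T Rot p Om v c -> Qfeas T Rot (fun t => (Rot t)^T *m p t) Om v.
Proof.
move=> [SO_Rot SO_Om _ dyn]; split=> // t t_lt.
have [p_next Rot_next] := dyn t t_lt; split=> //.
have t_ltT : (t < T)%N by lia.
rewrite Rot_next trmx_mul !mulmxA (mulmx1C (SO_Om t t_lt).1) mul1mx.
by rewrite p_next mulmxDr mulmxA (SO_Rot t t_ltT).1 mul1mx.
Qed.

Lemma Qfeas_Pfeas Rot s Om v p c :
  (forall t, (t < T)%N -> p t = Rot t *m s t) -> \sum_k c k ord0 = 1 ->
  Qfeas T Rot s Om v -> Pfeas T Rot p Om v c.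
Proof.
move=> pE sum_c [SO_Rot SO_Om dyn]; split=> // t t_lt.
have [s_prev Rot_next] := dyn t t_lt; split=> //.
by rewrite !pE 1?Rot_next -?mulmxA ?s_prev ?mulmxDr //; lia.
Qed.

Lemma Pobj_lift Rot s Om v : Qfeas T Rot s Om v ->
  Pfeas T Rot (fun t => Rot t *m s t) Om v (c_star Rot s) /\
  costP Rot (fun t => Rot t *m s t) Om v (c_star Rot s) = costQ Rot s Om v.
Proof.
move=> feasQ; have orthR := Qfeas_orth feasQ.
split; first exact: Qfeas_Pfeas (sum_cstar Rot s) feasQ.
rewrite (@Pobj_Qobj Rot _ Om v _ s orthR _ (sum_cstar Rot s)) ?subrr ?mulmx0 ?dot0r ?addr0 //.
by move=> t /orthR orthRt; rewrite mulmxA orthRt mul1mx.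
Qed.

Lemma Qobj_le_Pobj Rot p Om v c : Pfeas T Rot p Om v c ->
  costQ Rot (fun t => (Rot t)^T *m p t) Om v <= costP Rot p Om v c.
Proof.
move=> feasP; rewrite (Pobj_Qobj Om v (Pfeas_orth feasP) (fun _ _ => erefl)).
  by rewrite lerDl gram_quad_ge0.
by case: feasP.
Qed.

Lemma Popt_Qopt Rot p Om v c :
  Popt T Bm y w om ka lam Rot p Om v c <->
  Qopt T Bm y w om ka lam Rot (fun t => (Rot t)^T *m p t) Om v /\
  c = c_star Rot (fun t => (Rot t)^T *m p t).
Proof.
set s := fun t => (Rot t)^T *m p t.
have Pobj_cstar : (forall t, (t < T)%N -> (Rot t)^T *m Rot t = 1%:M) ->
    costP Rot p Om v (c_star Rot s) = costQ Rot s Om v.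
  move=> orthR; rewrite (Pobj_Qobj Om v orthR (fun _ _ => erefl) (sum_cstar _ _)).
  by rewrite subrr mulmx0 dot0r addr0.
have pE : (forall t, (t < T)%N -> (Rot t)^T *m Rot t = 1%:M) ->
    forall t, (t < T)%N -> p t = Rot t *m s t.
  by move=> orthR t /orthR/mulmx1C RRt; rewrite mulmxA RRt mul1mx.
split=> [[feasP optP] | [[feasQ optQ] ->]].
  have orthR := Pfeas_orth feasP; have sum_c : \sum_k c k ord0 = 1 by case: feasP.
  have c_eq : c = c_star Rot s.
    have := optP _ _ _ _ _ (Qfeas_Pfeas (pE orthR) (sum_cstar Rot s) (Pfeas_Qfeas feasP)).
    rewrite (Pobj_Qobj Om v orthR (fun _ _ => erefl) sum_c) Pobj_cstar // gerDl.
    by move/gram_quad_le0/eqP; rewrite subr_eq0 => /eqP.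
  split=> //; split=> [|Rot' s' Om' v' /Pobj_lift[feasP' <-]]; first exact: Pfeas_Qfeas feasP.
  by rewrite -Pobj_cstar // -c_eq; apply: optP.
have orthR := Qfeas_orth feasQ.
split=> [|Rot' p' Om' v' c' feasP']; first exact: Qfeas_Pfeas (pE orthR) (sum_cstar _ _) feasQ.
rewrite Pobj_cstar //.
exact: le_trans (optQ _ _ _ _ (Pfeas_Qfeas feasP')) (Qobj_le_Pobj feasP').
Qed.

Lemma Pval_Qval : Pval T Bm y w om ka lam = Qval T Bm y w om ka lam.
Proof.
symmetry; apply: inf_eq_coinitial.
- move=> _ [Rot [s [Om [v [/Pobj_lift[feasP valP] ->]]]]].
  by exists Rot, (fun t => Rot t *m s t), Om, v, (c_star Rot s).
- move=> _ [Rot [p [Om [v [c [feasP ->]]]]]].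
  exists (costQ Rot (fun t => (Rot t)^T *m p t) Om v); last exact: Qobj_le_Pobj.
  by exists Rot, (fun t => (Rot t)^T *m p t), Om, v; split=> //; apply: Pfeas_Qfeas feasP.
- exists (costQ (fun _ => 1%:M) (fun _ => 0) (fun _ => 1%:M) (fun _ => 0)).
  exists (fun _ => 1%:M), (fun _ => 0), (fun _ => 1%:M), (fun _ => 0); split=> //.
  have SO3_1 : is_SO3 (1%:M : 'M[F]_3) by rewrite /is_SO3 trmx1 mulmx1 det1.
  by split=> // t _; rewrite mulmx0 mulmx1 addr0.
- by exists 0 => _ [Rot [s [Om [v [_ ->]]]]]; apply: Qobj_ge0.
Qed.

End Reduction.

Section Coordinates.
Variables (F : realType) (T : nat).
Local Notation vars := ('I_(nvar T) -> F).

Lemma polyfun_getx k : polyfun 1 (fun x : vars => getx x k).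
Proof.
by rewrite /getx; case: insubP => [i _ _|_]; [apply: polyfun_var | apply: polyfun_cst].
Qed.

Lemma polymx_dec_Rot t : polymx 1 (fun x : vars => dec_Rot x t).
Proof. by move=> i j; under eq_fun => x do rewrite mxE; apply: polyfun_getx. Qed.

Lemma polymx_dec_s t : polymx 1 (fun x : vars => dec_s x t).
Proof. by move=> i j; under eq_fun => x do rewrite mxE; apply: polyfun_getx. Qed.

Lemma polymx_dec_Om t : polymx 1 (fun x : vars => dec_Om x t).
Proof. by move=> i j; under eq_fun => x do rewrite mxE; apply: polyfun_getx. Qed.

Lemma polymx_dec_v t : polymx 1 (fun x : vars => dec_v x t).
Proof. by move=> i j; under eq_fun => x do rewrite mxE; apply: polyfun_getx. Qed.

Variables (N K : nat) (Bm : 'I_N -> 'M[F]_(3, K)) (y : nat -> 'I_N -> 'cV[F]_3)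
  (w : nat -> 'I_N -> F) (om ka : nat -> F) (lam : F).

Lemma polymx_residual t i :
  polymx 1 (fun x : vars => (dec_Rot x t)^T *m y t i - dec_s x t).
Proof.
apply: polymxB _ (polymx_dec_s t).
exact: polymxM (polymx_tr (polymx_dec_Rot t)) (polymx_cst 0 (y t i)).
Qed.

Lemma polymx_cstar :
  polymx 1 (fun x : vars => cstar T Bm y w lam (dec_Rot x) (dec_s x)).
Proof.
apply: polymxD (polymx_cst _ _); apply/polymxZ/polymx_mull/polymxD; last exact: polymx_cst.
apply: polymx_sum => t _; apply: polymx_sum => i _.
exact/polymxZ/polymx_mull/polymx_residual.
Qed.

Lemma polyfun_Qobj : polyfun 2 (fun x : vars =>
  Qobj T Bm y w om ka lam (dec_Rot x) (dec_s x) (dec_Om x) (dec_v x)).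
Proof.
apply: polyfunD; first apply: polyfunD.
- apply: polyfun_sum => t _; apply: polyfun_sum => i _; apply/polyfunZ/(@polyfun_sqn _ _ 1).
  apply: polymxB _ (polymx_dec_s t).
  apply: polymxB _ (polymx_mull _ polymx_cstar).
  exact: polymxM (polymx_tr (polymx_dec_Rot t)) (polymx_cst 0 (y t i)).
- exact/polyfunZ/(@polyfun_sqn _ _ 1)/polymxB/polymx_cst/polymx_cstar.
- apply: polyfun_sum => t _; apply: polyfunD; apply/polyfunZ/(@polyfun_sqn _ _ 1).
    exact: polymxB (polymx_dec_v _) (polymx_dec_v _).
  exact: polymxB (polymx_dec_Om _) (polymx_dec_Om _).
Qed.

Lemma quadratic_locus_Qfeas : quadratic_locus (fun x : vars =>
  Qfeas T (dec_Rot x) (dec_s x) (dec_Om x) (dec_v x)).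
Proof.
apply: (@quadratic_locus_ext _ _ (fun x =>
  (forall t, (t < T)%N -> is_SO3 (dec_Rot x t)) /\
  (forall t, (t < T - 1)%N -> is_SO3 (dec_Om x t)) /\
  (forall t, (t < T - 1)%N -> dec_Om x t *m dec_s x t.+1 = dec_s x t + dec_v x t /\
     dec_Rot x t.+1 = dec_Rot x t *m dec_Om x t))).
  by move=> x; split=> [[? [? ?]] | []].
apply: quadratic_locusI; last apply: quadratic_locusI.
- by apply: quadratic_locus_forall_ltn => t; apply/quadratic_locus_SO3/polymx_dec_Rot.
- by apply: quadratic_locus_forall_ltn => t; apply/quadratic_locus_SO3/polymx_dec_Om.
apply: quadratic_locus_forall_ltn => t; apply: quadratic_locusI; apply: quadratic_locus_mxeq.
- exact: polymxM (polymx_dec_Om t) (polymx_dec_s t.+1).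
- exact: polymx_le (polymxD (polymx_dec_s t) (polymx_dec_v t)).
- exact: polymx_le (polymx_dec_Rot t.+1).
- exact: polymxM (polymx_dec_Rot t) (polymx_dec_Om t).
Qed.

End Coordinates.

Theorem proposition2 (F : realType) (T N K : nat)
  (hT : (2 <= T)%N) (hN : (1 <= N)%N) (hK : (1 <= K)%N)
  (Bm : 'I_N -> 'M[F]_(3, K)) (y : nat -> 'I_N -> 'cV[F]_3)
  (w : nat -> 'I_N -> F) (om ka : nat -> F) (lam : F)
  (hw : forall t (i : 'I_N), (t < T)%N -> 0 < w t i)
  (hom : forall t, (t < T - 2)%N -> 0 <= om t)
  (hka : forall t, (t < T - 2)%N -> 0 <= ka t)
  (hlam : 0 < lam) :
  (* (i) *)
  (Pval T Bm y w om ka lam = Qval T Bm y w om ka lam /\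
   forall (Rot : nat -> 'M[F]_3) (p : nat -> 'cV[F]_3)
          (Om : nat -> 'M[F]_3) (v : nat -> 'cV[F]_3) (c : 'cV[F]_K),
     let s := fun t => (Rot t)^T *m p t in
     Popt T Bm y w om ka lam Rot p Om v c <->
     (Qopt T Bm y w om ka lam Rot s Om v /\ c = cstar T Bm y w lam Rot s))
  /\
  (* (ii) *)
  ((exists P : {mpoly F[nvar T]},
      (msize P <= 3)%N /\
      forall x : 'I_(nvar T) -> F,
        Qobj T Bm y w om ka lam (dec_Rot x) (dec_s x) (dec_Om x) (dec_v x)
        = P.@[x])
   /\
   (exists cs : seq {mpoly F[nvar T]},
      all (fun q => msize q <= 3)%N cs /\
      forall x : 'I_(nvar T) -> F,
        Qfeas T (dec_Rot x) (dec_s x) (dec_Om x) (dec_v x)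
        <-> all (fun q => q.@[x] == 0) cs)).
Proof.
split; first by split; [exact: Pval_Qval | exact: Popt_Qopt].
by split; [exact: polyfun_Qobj | exact: quadratic_locus_Qfeas].
Qed.
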